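(* Let $X=\bigsqcup_{\lambda\in\Lambda}G_\lambda$ be an MCQ, $R$ a ring, $M$ a left $R$-module, and let $(f_1,f_2,f_3,f_4;\phi_1,\phi_2)$ be a 6-tuple of maps ($f_1,f_2:X\times X\to R$, $f_3,f_4:\bigsqcup_\lambda(G_\lambda\times G_\lambda)\to R$, $\phi_1:X\times X\to M$, $\phi_2:\bigsqcup_\lambda(G_\lambda\times G_\lambda)\to M$) satisfying conditions (0-i)–(4-$\phi$). Define $g_1,g_2:X\times X\to R$, $\psi_1:X\times X\to M$, $\psi_2:\bigsqcup_\lambda(G_\lambda\times G_\lambda)\to M$ by $g_1(x,y)=f_1(e_x,y)$, $g_2(x,y)=f_3(x\triangleleft y,\,x^{-1}\triangleleft y)\,f_2(x,y)\,f_3(e_y,y)$, $\psi_1(x,y)=f_3(x\triangleleft y,\,x^{-1}\triangleleft y)\,\phi_1(x,y)$, $\psi_2(a,b)=f_3(ab,\,b^{-1}a^{-1})\,\phi_2(a,b)$. Then $(g_1,g_2;\psi_1,\psi_2)$ is an augmented MCQ Alexander pair.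
   Context: A multiple conjugation quandle (MCQ) is a set $X=\bigsqcup_{\lambda\in\Lambda}G_\lambda$ that is a disjoint union of groups $G_\lambda$, together with a binary operation $\triangleleft:X\times X\to X$ such that: (i) for all $a,b\in G_\lambda$, $a\triangleleft b=b^{-1}ab$; (ii) for all $x\in X$ and $a,b\in G_\lambda$, $x\triangleleft e_\lambda=x$ and $x\triangleleft(ab)=(x\triangleleft a)\triangleleft b$, where $e_\lambda$ is the identity of $G_\lambda$; (iii) for all $x,y,z\in X$, $(x\triangleleft y)\triangleleft z=(x\triangleleft z)\triangleleft(y\triangleleft z)$; (iv) for all $x\in X$ and $a,b\in G_\lambda$, the elements $a\triangleleft x$ and $b\triangleleft x$ lie in a common group $G_\mu$ and $(ab)\triangleleft x=(a\triangleleft x)(b\triangleleft x)$. For $x\in X$, $G_x$ denotes the group containing $x$, $e_x$ its identity, $x^{-1}$ the inverse of $x$ in $G_x$. $\bigsqcup_{\lambda}(G_\lambda\times G_\lambda)$ is the set of pairs of elements lying in a common group $G_\lambda$. Rings have a multiplicative identity $1\neq0$ and need not be commutative. Conditions (0-i)–(4-$\phi$) on a 6-tuple $(f_1,f_2,f_3,f_4;\phi_1,\phi_2)$: For all $\lambda$ and $a,b,c\in G_\lambda$: (0-i) $f_3(a,b)$, $f_4(a,b)$ invertible; (0-ii) $f_3(ab,c)f_3(a,b)=f_3(a,bc)$; (0-iii) $f_3(ab,c)f_4(a,b)=f_4(a,bc)f_3(b,c)$; (0-iv) $f_4(ab,c)=f_4(a,bc)f_4(b,c)$; (0-$\phi$)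 $f_3(ab,c)\phi_2(a,b)+\phi_2(ab,c)=f_4(a,bc)\phi_2(b,c)+\phi_2(a,bc)$. For all $a,b\in G_\lambda$: (1-i) $f_1(a,b)=f_4(b^{-1},ab)f_3(a,b)$; (1-ii) $f_3(b,b^{-1}ab)+f_4(b,b^{-1}ab)f_2(a,b)=f_4(a,b)$; (1-$\phi$) $f_4(b,b^{-1}ab)\phi_1(a,b)+\phi_2(b,b^{-1}ab)=\phi_2(a,b)$. For all $x\in X$, $a,b\in G_\lambda$: (2-i) $f_1(x,e_\lambda)=1$; (2-ii) $f_1(x,ab)=f_1(x\triangleleft a,b)f_1(x,a)$; (2-iii) $f_2(x,ab)f_3(a,b)=f_1(x\triangleleft a,b)f_2(x,a)$; (2-iv) $f_2(x,ab)f_4(a,b)=f_2(x\triangleleft a,b)$; (2-$\phi$i) $f_2(x,e_\lambda)\phi_2(e_\lambda,e_\lambda)=\phi_1(x,e_\lambda)$; (2-$\phi$ii) $f_2(x,ab)\phi_2(a,b)+\phi_1(x,ab)=f_1(x\triangleleft a,b)\phi_1(x,a)+\phi_1(x\triangleleft a,b)$. For all $x,y,z\in X$: (3-i) $f_1(x\triangleleft y,z)f_1(x,y)=f_1(x\triangleleft z,y\triangleleft z)f_1(x,z)$; (3-ii) $f_1(x\triangleleft y,z)f_2(x,y)=f_2(x\triangleleft z,y\triangleleft z)f_1(y,z)$; (3-iii) $f_2(x\triangleleft y,z)=f_1(x\triangleleft z,y\triangleleft z)f_2(x,z)+f_2(x\triangleleft z,y\triangleleft z)f_2(y,z)$; (3-$\phi$)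 $f_1(x\triangleleft y,z)\phi_1(x,y)+\phi_1(x\triangleleft y,z)=f_1(x\triangleleft z,y\triangleleft z)\phi_1(x,z)+f_2(x\triangleleft z,y\triangleleft z)\phi_1(y,z)+\phi_1(x\triangleleft z,y\triangleleft z)$. For all $a,b\in G_\lambda$, $x\in X$: (4-i) $f_1(ab,x)f_3(a,b)=f_3(a\triangleleft x,b\triangleleft x)f_1(a,x)$; (4-ii) $f_1(ab,x)f_4(a,b)=f_4(a\triangleleft x,b\triangleleft x)f_1(b,x)$; (4-iii) $f_2(ab,x)=f_3(a\triangleleft x,b\triangleleft x)f_2(a,x)+f_4(a\triangleleft x,b\triangleleft x)f_2(b,x)$; (4-$\phi$) $f_1(ab,x)\phi_2(a,b)+\phi_1(ab,x)=f_3(a\triangleleft x,b\triangleleft x)\phi_1(a,x)+f_4(a\triangleleft x,b\triangleleft x)\phi_1(b,x)+\phi_2(a\triangleleft x,b\triangleleft x)$. An MCQ Alexander pair is a pair of maps $g_1,g_2:X\times X\to R$ such that: (A1) for all $a,b\in G_\lambda$: $g_1(a,b)+g_2(a,b)=g_1(a,a^{-1}b)$; (A2) for all $a,b\in G_\lambda$, $x\in X$: $g_1(a,x)=g_1(b,x)$ and $g_2(ab,x)=g_2(a,x)+g_1(b\triangleleft x,a^{-1}\triangleleft x)g_2(b,x)$; (A3) for all $x\in X$, $a,b\in G_\lambda$: $g_1(x,e_\lambda)=1$, $g_1(x,ab)=g_1(x\triangleleft a,b)g_1(x,a)$, $g_2(x,ab)=g_1(x\triangleleft a,b)g_2(x,a)$;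 (A4) for all $x,y,z\in X$: $g_1(x\triangleleft y,z)g_1(x,y)=g_1(x\triangleleft z,y\triangleleft z)g_1(x,z)$; $g_1(x\triangleleft y,z)g_2(x,y)=g_2(x\triangleleft z,y\triangleleft z)g_1(y,z)$; $g_2(x\triangleleft y,z)=g_1(x\triangleleft z,y\triangleleft z)g_2(x,z)+g_2(x\triangleleft z,y\triangleleft z)g_2(y,z)$. For an MCQ Alexander pair $(g_1,g_2)$, a $(g_1,g_2)$-twisted 2-cocycle is a pair $\psi_1:X\times X\to M$, $\psi_2:\bigsqcup_\lambda(G_\lambda\times G_\lambda)\to M$ with: (T1) for $a,b,c\in G_\lambda$: $\psi_2(a,b)+\psi_2(ab,c)=g_1(a,a^{-1})\psi_2(b,c)+\psi_2(a,bc)$; (T2) for $a,b\in G_\lambda$: $g_1(b,b^{-1})\psi_1(a,b)+\psi_2(b,b^{-1}ab)=\psi_2(a,b)$; (T3) for $x\in X$, $a,b\in G_\lambda$: $g_2(x,ab)\psi_2(a,b)+\psi_1(x,ab)=g_1(x\triangleleft a,b)\psi_1(x,a)+\psi_1(x\triangleleft a,b)$; (T4) for $x,y,z\in X$: $g_1(x\triangleleft y,z)\psi_1(x,y)+\psi_1(x\triangleleft y,z)=g_1(x\triangleleft z,y\triangleleft z)\psi_1(x,z)+g_2(x\triangleleft z,y\triangleleft z)\psi_1(y,z)+\psi_1(x\triangleleft z,y\triangleleft z)$; (T5) for $a,b\in G_\lambda$, $x\in X$: $g_1(ab,x)\psi_2(a,b)+\psi_1(ab,x)=\psi_1(a,x)+g_1(a\triangleleft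 x,a^{-1}\triangleleft x)\psi_1(b,x)+\psi_2(a\triangleleft x,b\triangleleft x)$. $(g_1,g_2;\psi_1,\psi_2)$ is an augmented MCQ Alexander pair if $(g_1,g_2)$ is an MCQ Alexander pair and $(\psi_1,\psi_2)$ is a $(g_1,g_2)$-twisted 2-cocycle. *)

From HB Require Import structures.
From mathcomp Require Import all_boot all_order all_algebra.
Set Implicit Arguments. Unset Strict Implicit. Unset Printing Implicit Defensive.
Import GRing.Theory.
Local Open Scope ring_scope.

(* A multiple conjugation quandle X = disjoint union of groups G_l, l : L.
   The carrier is [car]; [qlab x] is the index l with x in G_l.
   Group operations [qmul], [qinv] are total functions on the carrier but
   only their values on elements of a common group are meaningful/constrained. *)
Record MCQ := {
  car : Type;
  lbl : Type;
  qlab : car -> lbl;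
  qe : lbl -> car;
  qmul : car -> car -> car;
  qinv : car -> car;
  qop : car -> car -> car;
  lab_unit : forall l, qlab (qe l) = l;
  lab_mul : forall a b, qlab a = qlab b -> qlab (qmul a b) = qlab a;
  lab_inv : forall a, qlab (qinv a) = qlab a;
  mulA : forall a b c, qlab a = qlab b -> qlab b = qlab c ->
           qmul (qmul a b) c = qmul a (qmul b c);
  mul1g : forall a, qmul (qe (qlab a)) a = a;
  mulg1 : forall a, qmul a (qe (qlab a)) = a;
  mulVg : forall a, qmul (qinv a) a = qe (qlab a);
  mulgV : forall a, qmul a (qinv a) = qe (qlab a);
  mcq_i : forall a b, qlab a = qlab b -> qop a b = qmul (qmul (qinv b) a) b;
  mcq_ii1 : forall x l, qop x (qe l) = x;
  mcq_ii2 : forall x a b, qlab a = qlab b -> qop x (qmul a b) = qop (qop x a) b;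
  mcq_iii : forall x y z, qop (qop x y) z = qop (qop x z) (qop y z);
  mcq_iv1 : forall x a b, qlab a = qlab b -> qlab (qop a x) = qlab (qop b x);
  mcq_iv2 : forall x a b, qlab a = qlab b -> qop (qmul a b) x = qmul (qop a x) (qop b x)
}.

Section Defs.
Variable X : MCQ.
Local Notation "x <| y" := (qop x y) (at level 40, left associativity).
Local Notation "a * b" := (qmul a b) : mcq_scope.
Local Notation e x := (qe (qlab x)).
Local Notation "x ^-1" := (qinv x) : mcq_scope.
Declare Scope mcq_scope.
Delimit Scope mcq_scope with q.

Definition invertible (R : nzRingType) (r : R) := exists s : R, s * r = 1 /\ r * s = 1.

Variables (R : nzRingType) (M : lmodType R).
(* maps on the disjoint union of the G_l x G_l are represented as maps
   car -> car -> _, only evaluated at pairs in a common group *)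
Variables (f1 f2 f3 f4 : car X -> car X -> R) (phi1 phi2 : car X -> car X -> M).

Definition six_tuple_conditions : Prop :=
  (* (0-i) - (0-phi) *)
  (forall a b, qlab a = qlab b -> invertible (f3 a b) /\ invertible (f4 a b)) /\
  (forall a b c, qlab a = qlab b -> qlab b = qlab c ->
     f3 (a * b)%q c * f3 a b = f3 a (b * c)%q) /\
  (forall a b c, qlab a = qlab b -> qlab b = qlab c ->
     f3 (a * b)%q c * f4 a b = f4 a (b * c)%q * f3 b c) /\
  (forall a b c, qlab a = qlab b -> qlab b = qlab c ->
     f4 (a * b)%q c = f4 a (b * c)%q * f4 b c) /\
  (forall a b c, qlab a = qlab b -> qlab b = qlab c ->
     f3 (a * b)%q c *: phi2 a b + phi2 (a * b)%q c
     = f4 a (b * c)%q *: phi2 b c + phi2 a (b * c)%q) /\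
  (* (1-i) - (1-phi) *)
  (forall a b, qlab a = qlab b -> f1 a b = f4 (b^-1)%q (a * b)%q * f3 a b) /\
  (forall a b, qlab a = qlab b ->
     f3 b ((b^-1 * a) * b)%q + f4 b ((b^-1 * a) * b)%q * f2 a b = f4 a b) /\
  (forall a b, qlab a = qlab b ->
     f4 b ((b^-1 * a) * b)%q *: phi1 a b + phi2 b ((b^-1 * a) * b)%q = phi2 a b) /\
  (* (2-i) - (2-phi ii) *)
  (forall x l, f1 x (qe l) = 1) /\
  (forall x a b, qlab a = qlab b -> f1 x (a * b)%q = f1 (x <| a) b * f1 x a) /\
  (forall x a b, qlab a = qlab b ->
     f2 x (a * b)%q * f3 a b = f1 (x <| a) b * f2 x a) /\
  (forall x a b, qlab a = qlab b -> f2 x (a * b)%q * f4 a b = f2 (x <| a) b) /\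
  (forall x l, f2 x (qe l) *: phi2 (qe l) (qe l) = phi1 x (qe l)) /\
  (forall x a b, qlab a = qlab b ->
     f2 x (a * b)%q *: phi2 a b + phi1 x (a * b)%q
     = f1 (x <| a) b *: phi1 x a + phi1 (x <| a) b) /\
  (* (3-i) - (3-phi) *)
  (forall x y z, f1 (x <| y) z * f1 x y = f1 (x <| z) (y <| z) * f1 x z) /\
  (forall x y z, f1 (x <| y) z * f2 x y = f2 (x <| z) (y <| z) * f1 y z) /\
  (forall x y z, f2 (x <| y) z
     = f1 (x <| z) (y <| z) * f2 x z + f2 (x <| z) (y <| z) * f2 y z) /\
  (forall x y z, f1 (x <| y) z *: phi1 x y + phi1 (x <| y) z
     = f1 (x <| z) (y <| z) *: phi1 x z + f2 (x <| z) (y <| z) *: phi1 y z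
       + phi1 (x <| z) (y <| z)) /\
  (* (4-i) - (4-phi) *)
  (forall a b x, qlab a = qlab b ->
     f1 (a * b)%q x * f3 a b = f3 (a <| x) (b <| x) * f1 a x) /\
  (forall a b x, qlab a = qlab b ->
     f1 (a * b)%q x * f4 a b = f4 (a <| x) (b <| x) * f1 b x) /\
  (forall a b x, qlab a = qlab b ->
     f2 (a * b)%q x = f3 (a <| x) (b <| x) * f2 a x + f4 (a <| x) (b <| x) * f2 b x) /\
  (forall a b x, qlab a = qlab b ->
     f1 (a * b)%q x *: phi2 a b + phi1 (a * b)%q x
     = f3 (a <| x) (b <| x) *: phi1 a x + f4 (a <| x) (b <| x) *: phi1 b x
       + phi2 (a <| x) (b <| x)).

End Defs.

Section Alex.
Variable X : MCQ.
Local Notation "x <| y" := (qop x y) (at level 40, left associativity).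
Local Notation "a * b" := (qmul a b) : mcq_scope.
Local Notation "x ^-1" := (qinv x) : mcq_scope.
Delimit Scope mcq_scope with q.
Variables (R : nzRingType) (M : lmodType R).

Definition MCQ_Alexander_pair (g1 g2 : car X -> car X -> R) : Prop :=
  (* (A1) *)
  (forall a b, qlab a = qlab b -> g1 a b + g2 a b = g1 a (a^-1 * b)%q) /\
  (* (A2) *)
  (forall a b x, qlab a = qlab b -> g1 a x = g1 b x) /\
  (forall a b x, qlab a = qlab b ->
     g2 (a * b)%q x = g2 a x + g1 (b <| x) (a^-1 <| x)%q * g2 b x) /\
  (* (A3) *)
  (forall x l, g1 x (qe l) = 1) /\
  (forall x a b, qlab a = qlab b -> g1 x (a * b)%q = g1 (x <| a) b * g1 x a) /\
  (forall x a b, qlab a = qlab b -> g2 x (a * b)%q = g1 (x <| a) b * g2 x a) /\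
  (* (A4) *)
  (forall x y z, g1 (x <| y) z * g1 x y = g1 (x <| z) (y <| z) * g1 x z) /\
  (forall x y z, g1 (x <| y) z * g2 x y = g2 (x <| z) (y <| z) * g1 y z) /\
  (forall x y z, g2 (x <| y) z
     = g1 (x <| z) (y <| z) * g2 x z + g2 (x <| z) (y <| z) * g2 y z).

Definition twisted_2_cocycle (g1 g2 : car X -> car X -> R)
  (psi1 psi2 : car X -> car X -> M) : Prop :=
  (* (T1) *)
  (forall a b c, qlab a = qlab b -> qlab b = qlab c ->
     psi2 a b + psi2 (a * b)%q c = g1 a (a^-1)%q *: psi2 b c + psi2 a (b * c)%q) /\
  (* (T2) *)
  (forall a b, qlab a = qlab b ->
     g1 b (b^-1)%q *: psi1 a b + psi2 b ((b^-1 * a) * b)%q = psi2 a b) /\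
  (* (T3) *)
  (forall x a b, qlab a = qlab b ->
     g2 x (a * b)%q *: psi2 a b + psi1 x (a * b)%q
     = g1 (x <| a) b *: psi1 x a + psi1 (x <| a) b) /\
  (* (T4) *)
  (forall x y z, g1 (x <| y) z *: psi1 x y + psi1 (x <| y) z
     = g1 (x <| z) (y <| z) *: psi1 x z + g2 (x <| z) (y <| z) *: psi1 y z
       + psi1 (x <| z) (y <| z)) /\
  (* (T5) *)
  (forall a b x, qlab a = qlab b ->
     g1 (a * b)%q x *: psi2 a b + psi1 (a * b)%q x
     = psi1 a x + g1 (a <| x) (a^-1 <| x)%q *: psi1 b x + psi2 (a <| x) (b <| x)).

Definition augmented_MCQ_Alexander_pair (g1 g2 : car X -> car X -> R)
  (psi1 psi2 : car X -> car X -> M) : Prop :=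
  MCQ_Alexander_pair g1 g2 /\ twisted_2_cocycle g1 g2 psi1 psi2.

End Alex.

From Pilot Require Import Defs.
From mathcomp Require Import all_boot all_order all_algebra.
Set Implicit Arguments. Unset Strict Implicit. Unset Printing Implicit Defensive.
Import GRing.Theory.
Local Open Scope ring_scope.

(* The proof is a gauge argument.  Put u(z) = f3(e_z, z) and
   v(z) = f3(z, z^-1).  Conditions (0-i)-(0-iv) force
     f3(a,b) = u(ab) v(a),   f4(a,b) = u(ab) k(a) v(b),   u(z) v(z) = 1,
   where k(a) = v(a) f4(a, e_a) is multiplicative on each group G_l.
   Hence g1(a,b) = k(b^-1) whenever a, b lie in a common group, and
     g1(x,y) = v(x<|y) f1(x,y) u(x),    g2(x,y) = v(x<|y) f2(x,y) u(y),
     psi1(x,y) = v(x<|y) phi1(x,y),    psi2(a,b) = v(ab) phi2(a,b),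
   i.e. (g1,g2;psi1,psi2) is (f1,f2;phi1,phi2) conjugated by u.  Every
   axiom (A1)-(A4), (T1)-(T5) is then the corresponding condition on the
   6-tuple multiplied on the left by some v and on the right by some u. *)

(* Discharge side conditions stating that some product/inverse expressions
   lie in the same group, from hypotheses [qlab a = qlab b]. *)
Ltac normlab := repeat (rewrite lab_inv || rewrite lab_unit ||
   (rewrite lab_mul; [| solve [normlab; congruence]])).
Ltac lab := solve [normlab; congruence].

Section MCQGroupFacts.
Variable X : MCQ.
Implicit Types x y a b : car X.
Local Notation e x := (qe (qlab x)).

Lemma lab_e x : qlab (e x) = qlab x.
Proof. exact: lab_unit. Qed.

Lemma unit_idem x : qmul (e x) (e x) = e x.
Proof. by have := Defs.mul1g (e x); rewrite lab_unit. Qed.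

Lemma idem_unit y : qmul y y = y -> y = e y.
Proof.
move=> yy; rewrite -(Defs.mulVg y).
have -> : qmul (qinv y) y = qmul (qinv y) (qmul y y) by rewrite yy.
by rewrite -Defs.mulA ?lab_inv // Defs.mulVg Defs.mul1g.
Qed.

(* By (iv), [<| y] is a group homomorphism, so it maps identities to
   identities. *)
Lemma unit_op x y : qop (e x) y = e (qop x y).
Proof.
have idem : qmul (qop (e x) y) (qop (e x) y) = qop (e x) y.
  by rewrite -mcq_iv2 // unit_idem.
rewrite {1}(idem_unit idem); congr qe; apply: mcq_iv1; exact: lab_e.
Qed.

Lemma lab_op_inv x y : qlab (qop (qinv x) y) = qlab (qop x y).
Proof. apply: mcq_iv1; exact: lab_inv. Qed.

Lemma op_mulV x y : qmul (qop x y) (qop (qinv x) y) = e (qop x y).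
Proof. by rewrite -mcq_iv2 ?lab_inv // Defs.mulgV unit_op. Qed.

Lemma inv_uniq x y : qlab x = qlab y -> qmul x y = e x -> qinv x = y.
Proof.
move=> xy xyE.
have -> : qinv x = qmul (qinv x) (qmul x y) by rewrite xyE -(lab_inv x) Defs.mulg1.
by rewrite -Defs.mulA ?lab_inv // Defs.mulVg xy Defs.mul1g.
Qed.

Lemma invK a : qinv (qinv a) = a.
Proof. by apply: inv_uniq; rewrite ?lab_inv // Defs.mulVg. Qed.

Lemma inv_op_inv a x : qinv (qop (qinv a) x) = qop a x.
Proof.
apply: inv_uniq; first by rewrite lab_op_inv.
by rewrite -mcq_iv2 ?lab_inv // Defs.mulVg unit_op lab_op_inv.
Qed.

Lemma inv_mulV a b : qlab a = qlab b -> qinv (qmul (qinv a) b) = qmul (qinv b) a.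
Proof.
move=> ab; apply: inv_uniq; first by lab.
rewrite (@Defs.mulA _ (qinv a) b); try lab.
rewrite -(@Defs.mulA _ b (qinv b) a); try lab.
by rewrite Defs.mulgV -ab Defs.mul1g Defs.mulVg; congr qe; lab.
Qed.

Lemma conj_mul a b : qlab a = qlab b ->
  qmul b (qmul (qmul (qinv b) a) b) = qmul a b.
Proof.
move=> ab.
rewrite -(@Defs.mulA _ b (qmul (qinv b) a) b); try lab.
by rewrite -(@Defs.mulA _ b (qinv b) a) ?Defs.mulgV -?ab ?Defs.mul1g //; lab.
Qed.

Lemma mul_invM a b : qlab a = qlab b ->
  qmul (qmul a b) (qmul (qinv b) (qinv a)) = e (qmul a b).
Proof.
move=> ab.
rewrite (@Defs.mulA _ a b); try lab.
rewrite -(@Defs.mulA _ b (qinv b) (qinv a)); try lab.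
by rewrite Defs.mulgV -ab -(lab_inv a) Defs.mul1g Defs.mulgV; congr qe; lab.
Qed.

End MCQGroupFacts.

Lemma invertible_idem (R : nzRingType) (r : R) : invertible r -> r * r = r -> r = 1.
Proof. by move=> [s [sr _]] rr; rewrite -sr -{2}rr mulrA sr mul1r. Qed.

Section Gauge.
Variables (X : MCQ) (R : nzRingType) (f3 f4 : car X -> car X -> R).
Implicit Types x y z a b : car X.
Local Notation e x := (qe (qlab x)).

Hypothesis f34_invertible : forall a b, qlab a = qlab b ->
  invertible (f3 a b) /\ invertible (f4 a b).
Hypothesis f3_cocycle : forall a b c, qlab a = qlab b -> qlab b = qlab c ->
  f3 (qmul a b) c * f3 a b = f3 a (qmul b c).
Hypothesis f3_f4_exchange : forall a b c, qlab a = qlab b -> qlab b = qlab c ->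
  f3 (qmul a b) c * f4 a b = f4 a (qmul b c) * f3 b c.
Hypothesis f4_cocycle : forall a b c, qlab a = qlab b -> qlab b = qlab c ->
  f4 (qmul a b) c = f4 a (qmul b c) * f4 b c.

(* The gauge u, its inverse v, and the character k of each group G_l;
   k is locked so that ring rewriting never looks inside it. *)
Definition u z := f3 (e z) z.
Definition v z := f3 z (qinv z).
Definition k a := locked (v a * f4 a (e a)).

Lemma kE a : k a = v a * f4 a (e a).
Proof. by rewrite /k -lock. Qed.

(* By (0-ii), f3(e,e) is an invertible idempotent. *)
Lemma f3_unit x : f3 (e x) (e x) = 1.
Proof.
apply: invertible_idem; first by case: (@f34_invertible (e x) (e x) erefl).
by have := @f3_cocycle (e x) (e x) (e x) erefl erefl; rewrite unit_idem.
Qed.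

Lemma u_unit x : u (e x) = 1.
Proof. by rewrite /u lab_unit f3_unit. Qed.

(* (0-ii) at (e_z, z, z^-1). *)
Lemma vu z : v z * u z = 1.
Proof.
have := f3_cocycle (lab_e z) (esym (lab_inv z)).
by rewrite Defs.mul1g Defs.mulgV f3_unit.
Qed.

(* v is a left inverse of the invertible u, hence also a right inverse. *)
Lemma uv z : u z * v z = 1.
Proof.
have [s [_ us]] := proj1 (f34_invertible (lab_e z)).
have -> : v z = s by rewrite -(mulr1 (v z)) -us mulrA vu mul1r.
exact: us.
Qed.

Lemma v_unit x : v (e x) = 1.
Proof. by have := vu (e x); rewrite u_unit mulr1. Qed.

Lemma uvK r z : r * u z * v z = r. Proof. by rewrite -mulrA uv mulr1. Qed.
Lemma vuK r z : r * v z * u z = r. Proof. by rewrite -mulrA vu mulr1. Qed.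

(* (0-ii) makes f3 the coboundary of u. *)
Lemma f3_gauge a b : qlab a = qlab b -> f3 a b = u (qmul a b) * v a.
Proof.
move=> ab; have := f3_cocycle (lab_e a) ab.
rewrite Defs.mul1g -[in f3 (e a) (qmul a b)](lab_mul ab) -/(u a) -/(u (qmul a b)).
by move=> <-; rewrite uvK.
Qed.

(* (0-iii) then makes f4 the coboundary of u twisted by k. *)
Lemma f4_gauge a b : qlab a = qlab b -> f4 a b = u (qmul a b) * k a * v b.
Proof.
move=> ab; have := f3_f4_exchange (esym (lab_e a)) (etrans (lab_e a) ab).
rewrite Defs.mulg1 ab Defs.mul1g -/(u b) -ab f3_gauge // => E.
by rewrite kE !mulrA E uvK.
Qed.

(* By (0-iv), f4(e,e) is an invertible idempotent. *)
Lemma k_unit x : k (e x) = 1.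
Proof.
rewrite kE v_unit mul1r lab_unit.
apply: invertible_idem; first by case: (@f34_invertible (e x) (e x) erefl).
by have := @f4_cocycle (e x) (e x) (e x) erefl erefl; rewrite unit_idem => <-.
Qed.

(* (0-iv) makes k multiplicative on each group. *)
Lemma kM a b : qlab a = qlab b -> k (qmul a b) = k a * k b.
Proof.
move=> ab; have := f4_cocycle ab (esym (lab_e b)).
rewrite Defs.mulg1 !kE (lab_mul ab) ab => ->.
by rewrite f4_gauge -?ab // kE !mulrA vu mul1r.
Qed.

Lemma kVk b : k (qinv b) * k b = 1.
Proof. by rewrite -kM ?lab_inv // Defs.mulVg k_unit. Qed.

Section Transfer.
Variables (M : lmodType R) (f1 f2 : car X -> car X -> R) (phi1 phi2 : car X -> car X -> M).

(* The conditions (0-phi), (1-i), (1-ii), (1-phi), (2-i), (2-ii), (2-iii),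
   (2-phi ii), (3-i)-(3-phi), (4-i), (4-iii), (4-phi). *)
Hypothesis phi2_cocycle : forall a b c, qlab a = qlab b -> qlab b = qlab c ->
  f3 (qmul a b) c *: phi2 a b + phi2 (qmul a b) c
  = f4 a (qmul b c) *: phi2 b c + phi2 a (qmul b c).
Hypothesis f1_same_group : forall a b, qlab a = qlab b ->
  f1 a b = f4 (qinv b) (qmul a b) * f3 a b.
Hypothesis f2_conj : forall a b, qlab a = qlab b ->
  f3 b (qmul (qmul (qinv b) a) b) + f4 b (qmul (qmul (qinv b) a) b) * f2 a b = f4 a b.
Hypothesis phi1_conj : forall a b, qlab a = qlab b ->
  f4 b (qmul (qmul (qinv b) a) b) *: phi1 a b + phi2 b (qmul (qmul (qinv b) a) b)
  = phi2 a b.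
Hypothesis f1_unit : forall x l, f1 x (qe l) = 1.
Hypothesis f1_mul : forall x a b, qlab a = qlab b ->
  f1 x (qmul a b) = f1 (qop x a) b * f1 x a.
Hypothesis f2_mul : forall x a b, qlab a = qlab b ->
  f2 x (qmul a b) * f3 a b = f1 (qop x a) b * f2 x a.
Hypothesis phi1_mul : forall x a b, qlab a = qlab b ->
  f2 x (qmul a b) *: phi2 a b + phi1 x (qmul a b)
  = f1 (qop x a) b *: phi1 x a + phi1 (qop x a) b.
Hypothesis f1_rack : forall x y z,
  f1 (qop x y) z * f1 x y = f1 (qop x z) (qop y z) * f1 x z.
Hypothesis f12_rack : forall x y z,
  f1 (qop x y) z * f2 x y = f2 (qop x z) (qop y z) * f1 y z.
Hypothesis f2_rack : forall x y z, f2 (qop x y) z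
  = f1 (qop x z) (qop y z) * f2 x z + f2 (qop x z) (qop y z) * f2 y z.
Hypothesis phi1_rack : forall x y z,
  f1 (qop x y) z *: phi1 x y + phi1 (qop x y) z
  = f1 (qop x z) (qop y z) *: phi1 x z + f2 (qop x z) (qop y z) *: phi1 y z
    + phi1 (qop x z) (qop y z).
Hypothesis f1_f3_op : forall a b x, qlab a = qlab b ->
  f1 (qmul a b) x * f3 a b = f3 (qop a x) (qop b x) * f1 a x.
Hypothesis f2_op : forall a b x, qlab a = qlab b ->
  f2 (qmul a b) x = f3 (qop a x) (qop b x) * f2 a x + f4 (qop a x) (qop b x) * f2 b x.
Hypothesis phi_op : forall a b x, qlab a = qlab b ->
  f1 (qmul a b) x *: phi2 a b + phi1 (qmul a b) x
  = f3 (qop a x) (qop b x) *: phi1 a x + f4 (qop a x) (qop b x) *: phi1 b x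
    + phi2 (qop a x) (qop b x).

Definition g1 x y := f1 (e x) y.
Definition g2 x y := f3 (qop x y) (qop (qinv x) y) * f2 x y * f3 (e y) y.
Definition psi1 x y := f3 (qop x y) (qop (qinv x) y) *: phi1 x y.
Definition psi2 a b := f3 (qmul a b) (qmul (qinv b) (qinv a)) *: phi2 a b.

Lemma f3_op_inv x y : f3 (qop x y) (qop (qinv x) y) = v (qop x y).
Proof. by rewrite f3_gauge ?lab_op_inv // op_mulV u_unit mul1r. Qed.

Lemma f3_mul_inv a b : qlab a = qlab b ->
  f3 (qmul a b) (qmul (qinv b) (qinv a)) = v (qmul a b).
Proof.
by move=> ab; rewrite f3_gauge ?mul_invM ?u_unit ?mul1r // !lab_mul ?lab_inv.
Qed.

(* Within one group, g1 is the character k evaluated at b^-1 (by (1-i)). *)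
Lemma g1_same_group a b : qlab a = qlab b -> g1 a b = k (qinv b).
Proof.
move=> ab; rewrite /g1 ab f1_same_group ?lab_e // Defs.mul1g -/(u b).
by rewrite f4_gauge ?lab_inv // Defs.mulVg u_unit mul1r vuK.
Qed.

(* Conjugation formulas: (g1,g2;psi1,psi2) is (f1,f2;phi1,phi2) gauged by u.
   The formula for g1 is (4-i) with (a,b) = (e_x,x). *)
Lemma g1_gauge x y : g1 x y = v (qop x y) * f1 x y * u x.
Proof.
have := f1_f3_op y (lab_e x); rewrite Defs.mul1g -/(u x) unit_op -/(u (qop x y)).
by rewrite /g1 -mulrA => ->; rewrite mulrA vu mul1r.
Qed.

Lemma g2_gauge x y : g2 x y = v (qop x y) * f2 x y * u y.
Proof. by rewrite /g2 f3_op_inv. Qed.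

Lemma psi1_gauge x y : psi1 x y = v (qop x y) *: phi1 x y.
Proof. by rewrite /psi1 f3_op_inv. Qed.

Lemma psi2_gauge a b : qlab a = qlab b -> psi2 a b = v (qmul a b) *: phi2 a b.
Proof. by move=> ab; rewrite /psi2 f3_mul_inv. Qed.

(* (A1) is (1-ii) conjugated by k(b^-1) v(ab) and u(b). *)
Lemma A1 a b : qlab a = qlab b -> g1 a b + g2 a b = g1 a (qmul (qinv a) b).
Proof.
move=> ab; rewrite !g1_same_group ?lab_mul ?lab_inv //.
rewrite g2_gauge inv_mulV // kM ?lab_inv // (mcq_i ab).
have := congr1 (fun r => k (qinv b) * v (qmul a b) * r * u b) (f2_conj ab).
rewrite f3_gauge ?f4_gauge ?conj_mul //=; try lab.
by rewrite !mulrDr !mulrDl !mulrA !vuK kVk mul1r.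
Qed.

Lemma A2a a b x : qlab a = qlab b -> g1 a x = g1 b x.
Proof. by move=> ab; rewrite /g1 ab. Qed.

(* (A2) second half is (4-iii). *)
Lemma A2b a b x : qlab a = qlab b ->
  g2 (qmul a b) x = g2 a x + g1 (qop b x) (qop (qinv a) x) * g2 b x.
Proof.
move=> ab; rewrite !g2_gauge g1_same_group; last by apply: mcq_iv1; rewrite lab_inv.
rewrite inv_op_inv f2_op // f3_gauge ?f4_gauge; try exact: mcq_iv1.
by rewrite -mcq_iv2 // mulrDr mulrDl !mulrA !vu !mul1r.
Qed.

(* (A3) is (2-i), (2-ii), (2-iii). *)
Lemma A3a x l : g1 x (qe l) = 1.
Proof. by rewrite g1_gauge mcq_ii1 f1_unit mulr1 vu. Qed.

Lemma A3b x a b : qlab a = qlab b -> g1 x (qmul a b) = g1 (qop x a) b * g1 x a.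
Proof. by move=> ab; rewrite !g1_gauge f1_mul // (mcq_ii2 x ab) !mulrA uvK. Qed.

Lemma A3c x a b : qlab a = qlab b -> g2 x (qmul a b) = g1 (qop x a) b * g2 x a.
Proof.
move=> ab; have E := congr1 (fun r => r * u a) (f2_mul x ab).
rewrite /= f3_gauge // !mulrA vuK in E.
by rewrite g2_gauge g1_gauge g2_gauge (mcq_ii2 x ab) -mulrA E !mulrA uvK.
Qed.

(* (A4) is (3-i), (3-ii), (3-iii), using (x<|y)<|z = (x<|z)<|(y<|z). *)
Lemma A4a x y z : g1 (qop x y) z * g1 x y = g1 (qop x z) (qop y z) * g1 x z.
Proof.
have := congr1 (fun r => v (qop (qop x y) z) * r * u x) (f1_rack x y z).
by rewrite !g1_gauge -mcq_iii /= !mulrA !uvK.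
Qed.

Lemma A4b x y z : g1 (qop x y) z * g2 x y = g2 (qop x z) (qop y z) * g1 y z.
Proof.
have := congr1 (fun r => v (qop (qop x y) z) * r * u y) (f12_rack x y z).
by rewrite !g1_gauge !g2_gauge -mcq_iii /= !mulrA !uvK.
Qed.

Lemma A4c x y z : g2 (qop x y) z
  = g1 (qop x z) (qop y z) * g2 x z + g2 (qop x z) (qop y z) * g2 y z.
Proof.
have := congr1 (fun r => v (qop (qop x y) z) * r * u z) (f2_rack x y z).
by rewrite !g1_gauge !g2_gauge -mcq_iii /= mulrDr mulrDl !mulrA !uvK.
Qed.

Lemma alexander_pair : MCQ_Alexander_pair g1 g2.
Proof.
do !split; [exact: A1 | exact: A2a | exact: A2b | exact: A3a | exact: A3b
  | exact: A3c | exact: A4a | exact: A4b | exact: A4c].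
Qed.

(* (T1) is (0-phi) scaled by v(abc). *)
Lemma T1 a b c : qlab a = qlab b -> qlab b = qlab c ->
  psi2 a b + psi2 (qmul a b) c = g1 a (qinv a) *: psi2 b c + psi2 a (qmul b c).
Proof.
move=> ab bc; rewrite !psi2_gauge ?g1_same_group ?invK ?lab_inv; try lab.
have := congr1 (fun m => v (qmul a (qmul b c)) *: m) (phi2_cocycle ab bc).
rewrite f3_gauge ?f4_gauge; try lab.
by rewrite Defs.mulA //= !scalerDr !scalerA ?mulrA !vu !mul1r => ->.
Qed.

(* (T2) is (1-phi) scaled by v(ab). *)
Lemma T2 a b : qlab a = qlab b ->
  g1 b (qinv b) *: psi1 a b + psi2 b (qmul (qmul (qinv b) a) b) = psi2 a b.
Proof.
move=> ab; rewrite psi1_gauge !psi2_gauge; try lab.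
rewrite g1_same_group ?lab_inv // invK (mcq_i ab) conj_mul //.
have := congr1 (fun m => v (qmul a b) *: m) (phi1_conj ab).
rewrite f4_gauge ?conj_mul //=; try lab.
by rewrite !scalerDr !scalerA ?mulrA !vu !mul1r.
Qed.

(* (T3) is (2-phi ii) scaled by v((x<|a)<|b). *)
Lemma T3 x a b : qlab a = qlab b ->
  g2 x (qmul a b) *: psi2 a b + psi1 x (qmul a b)
  = g1 (qop x a) b *: psi1 x a + psi1 (qop x a) b.
Proof.
move=> ab; rewrite g2_gauge g1_gauge !psi1_gauge psi2_gauge // (mcq_ii2 x ab).
have := congr1 (fun m => v (qop (qop x a) b) *: m) (phi1_mul x ab).
by rewrite /= !scalerDr !scalerA ?mulrA !uvK.
Qed.

(* (T4) is (3-phi) scaled by v((x<|y)<|z). *)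
Lemma T4 x y z : g1 (qop x y) z *: psi1 x y + psi1 (qop x y) z
  = g1 (qop x z) (qop y z) *: psi1 x z + g2 (qop x z) (qop y z) *: psi1 y z
    + psi1 (qop x z) (qop y z).
Proof.
have := congr1 (fun m => v (qop (qop x y) z) *: m) (phi1_rack x y z).
by rewrite !g1_gauge g2_gauge !psi1_gauge -mcq_iii /= !scalerDr !scalerA ?mulrA !uvK.
Qed.

(* (T5) is (4-phi) scaled by v((a<|x)(b<|x)). *)
Lemma T5 a b x : qlab a = qlab b ->
  g1 (qmul a b) x *: psi2 a b + psi1 (qmul a b) x
  = psi1 a x + g1 (qop a x) (qop (qinv a) x) *: psi1 b x + psi2 (qop a x) (qop b x).
Proof.
move=> ab; have abx : qlab (qop a x) = qlab (qop b x) by exact: mcq_iv1.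
rewrite g1_gauge !psi1_gauge !psi2_gauge //.
rewrite g1_same_group; last by apply: mcq_iv1; rewrite lab_inv.
rewrite inv_op_inv (mcq_iv2 x ab) !scalerA ?mulrA !uvK.
have := congr1 (fun m => v (qmul (qop a x) (qop b x)) *: m) (phi_op x ab).
rewrite f3_gauge ?f4_gauge //.
by rewrite /= !scalerDr !scalerA ?mulrA !vu !mul1r.
Qed.

Lemma twisted_cocycle : twisted_2_cocycle g1 g2 psi1 psi2.
Proof.
do !split; [exact: T1 | exact: T2 | exact: T3 | exact: T4 | exact: T5].
Qed.

End Transfer.
End Gauge.

Theorem lemma4p2 (X : MCQ) (R : nzRingType) (M : lmodType R)
  (f1 f2 f3 f4 : car X -> car X -> R) (phi1 phi2 : car X -> car X -> M) :
  six_tuple_conditions f1 f2 f3 f4 phi1 phi2 ->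
  augmented_MCQ_Alexander_pair
    (fun x y => f1 (qe (qlab x)) y)
    (fun x y => f3 (qop x y) (qop (qinv x) y) * f2 x y * f3 (qe (qlab y)) y)
    (fun x y => f3 (qop x y) (qop (qinv x) y) *: phi1 x y)
    (fun a b => f3 (qmul a b) (qmul (qinv b) (qinv a)) *: phi2 a b).
Proof.
case=> f34_inv [f3_coc [f34_exch [f4_coc [phi2_coc [f1_same [f2_conj [phi1_conj
  [f1_unit [f1_mul [f2_mul [_ [_ [phi1_mul [f1_rack [f12_rack [f2_rack [phi1_rack
  [f1_f3_op [_ [f2_op phi_op]]]]]]]]]]]]]]]]]]]].
by split; [apply: (alexander_pair (f4 := f4)) | apply: (twisted_cocycle (f4 := f4))].
Qed.
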